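(* Let $k\ge1$, $f\in P_k$ and $t\in[0,h(f)]$. For $1\le i\le k$, we have $t_i\neq0$ if and only if there exists $r\in\mathbb{R}$ such that $|\{j\in\{0,\dots,k\}:\phi_f(t)_j>r\}|=i$. Moreover, if $r\in\mathbb{R}$ satisfies $|\{j:\phi_f(t)_j>r\}|=i$ and $g:\{0,\dots,k\}\to\{0,\dots,k\}$ is defined by $g(j)=i$ if $\phi_f(t)_j\le r$ and $g(j)=0$ if $\phi_f(t)_j>r$, then $g\in P_k$, $h(g)=e_i$ and $g\le f$.
   Context: A $k$-placing is a function $f:\{0,\dots,k\}\to\{0,\dots,k\}$ with $f(j)=|\{i:f(i)<f(j)\}|$ for all $j$; $P_k$ is the set of $k$-placings with pointwise order. The height $h:P_k\to\mathbb{N}^k$ is $h(f)_i=1$ if $f^{-1}(i)\ne\emptyset$, else $0$ ($1\le i\le k$); $e_1,\dots,e_k$ are the generators of $\mathbb{N}^k$ and $[0,m]=\{t\in\mathbb{R}^k:0\le t\le m\}$. Let $\varepsilon_0,\dots,\varepsilon_k$ be the standard basis of $\mathbb{R}^{k+1}$, $v_0=\frac1{k+1}\sum_{i=0}^k\varepsilon_i$, and for $f\in P_k$, $n\in\operatorname{range}(f)\setminus\{0\}$, $v_{f,n}=\frac1n\sum_{j: f(j)<n}\varepsilon_j$. Define $\phi_f:[0,h(f)]\to\mathbb{R}^{k+1}$ by $\phi_f(0)=v_0$ and, for $t\ne0$, $\phi_f(t)=(1-\|t\|_\infty)v_0+\frac{\|t\|_\infty}{\|t\|_1}\sum_{n\in\operatorname{range}(f)\setminus\{0\}}t_nv_{f,n}$.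 *)

From HB Require Import structures.
From mathcomp Require Import all_boot all_order all_algebra.
Set Implicit Arguments. Unset Strict Implicit. Unset Printing Implicit Defensive.
Import Order.TTheory GRing.Theory Num.Theory.
Local Open Scope ring_scope.

Definition placing (k : nat) (f : 'I_k.+1 -> 'I_k.+1) : Prop :=
  forall j : 'I_k.+1, nat_of_ord (f j) = #|[set i : 'I_k.+1 | (f i < f j)%N]|.

Definition placing_le (k : nat) (g f : 'I_k.+1 -> 'I_k.+1) : Prop :=
  forall j : 'I_k.+1, (g j <= f j)%N.

Definition in_range (k : nat) (f : 'I_k.+1 -> 'I_k.+1) (n : nat) : bool :=
  [exists j : 'I_k.+1, nat_of_ord (f j) == n].

(* height h(f)_i, meaningful for 1 <= i <= k *)
Definition height (k : nat) (f : 'I_k.+1 -> 'I_k.+1) (i : nat) : nat :=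
  if in_range f i then 1%N else 0%N.

(* Vectors t in R^k are represented as t : nat -> R, only the
   coordinates t 1, ..., t k being relevant. *)
Definition in_box (R : realFieldType) (k : nat) (f : 'I_k.+1 -> 'I_k.+1)
  (t : nat -> R) : Prop :=
  forall i : nat, (1 <= i <= k)%N -> 0 <= t i <= (height f i)%:R.

Definition norm_inf (R : realFieldType) (k : nat) (t : nat -> R) : R :=
  \big[Num.max/0]_(1 <= i < k.+1) `|t i|.

Definition norm_1 (R : realFieldType) (k : nat) (t : nat -> R) : R :=
  \sum_(1 <= i < k.+1) `|t i|.

Definition is_zero_vec (R : realFieldType) (k : nat) (t : nat -> R) : bool :=
  all (fun i => t i == 0) (iota 1 k).

Definition v0 (R : realFieldType) (k : nat) (j : 'I_k.+1) : R :=
  1 / (k.+1)%:R.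

(* v_{f,n} = (1/n) sum_{j : f j < n} eps_j *)
Definition vfn (R : realFieldType) (k : nat) (f : 'I_k.+1 -> 'I_k.+1) (n : nat)
  (j : 'I_k.+1) : R :=
  if (f j < n)%N then 1 / n%:R else 0.

Definition phi (R : realFieldType) (k : nat) (f : 'I_k.+1 -> 'I_k.+1)
  (t : nat -> R) (j : 'I_k.+1) : R :=
  if is_zero_vec k t then @v0 R k j
  else (1 - norm_inf k t) * @v0 R k j
       + norm_inf k t / norm_1 k t
         * \sum_(1 <= n < k.+1 | in_range f n) t n * @vfn R k f n j.

From HB Require Import structures.
From mathcomp Require Import all_boot all_order all_algebra.
Import Order.TTheory GRing.Theory Num.Theory.
Set Implicit Arguments. Unset Strict Implicit. Unset Printing Implicit Defensive.
Local Open Scope ring_scope.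

(* For t <> 0 write phi_f(t)_j = c + s * T(f j), where s = |t|_oo / |t|_1 > 0
   and T m = sum_{n in range f, m < n} t_n / n is a tail sum; for t = 0 the same
   formula holds with s = 0.  For m1 <= m2, T m1 - T m2 is the nonnegative gap
   sum_{n in range f, m1 < n <= m2} t_n / n.  Hence phi_f(t)_j is antitone in
   f j, and it drops strictly between f a and f b iff some t_n with n in the
   range of f and f a < n <= f b is nonzero. *)


Section Placings.

Variables (k : nat) (f : 'I_k.+1 -> 'I_k.+1).
Hypothesis hf : placing f.

(* A superlevel set of a function antitone in f is a down-set {f < i}, and its
   size i is then a value of f, since a placing counts the values below it. *)
Lemma antitone_superlevel (R : realDomainType) (u : 'I_k.+1 -> R) (r : R) (i : nat) :
  (forall a b, (f a <= f b)%N -> u b <= u a) ->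
  (i <= k)%N -> #|[set j | r < u j]| = i ->
  exists b, nat_of_ord (f b) = i /\ forall j, (r < u j) = (f j < i)%N.
Proof.
move=> u_anti ik cardU; set U := [set j | r < u j] in cardU.
have [b0 b0U] : exists b0, ~~ (r < u b0).
  have /set0Pn[b0] : ~: U != set0.
    rewrite -card_gt0 -(leq_add2l #|U|) cardsC cardU card_ord addn1.
    by rewrite ltnS.
  by rewrite !inE; exists b0.
have [b bU b_min] := @arg_minnP _ b0 (fun j => ~~ (r < u j)) (fun j => f j) b0U.
have U_below j : (r < u j) = (f j < f b)%N.
  apply/idP/idP => [rj | ltjb].
    by rewrite ltnNge; apply: contraNN bU => /u_anti /(lt_le_trans rj).
  by apply: contraTT ltjb => /b_min; rewrite -leqNgt.
have fb : nat_of_ord (f b) = i.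
  by rewrite -cardU (hf b); apply: eq_card => j; rewrite !inE U_below.
by exists b; split=> // j; rewrite U_below fb.
Qed.

Lemma placing_lower_neighbour b : (0 < f b)%N ->
  exists a, (f a < f b)%N /\ forall n, in_range f n -> (n < f b)%N -> (n <= f a)%N.
Proof.
move=> fb_gt0; have [a0 a0_below] : exists a0, (f a0 < f b)%N.
  have /set0Pn[a0] : [set j | f j < f b]%N != set0 by rewrite -card_gt0 -(hf b).
  by rewrite inE; exists a0.
have [a a_below a_max] :=
  @arg_maxnP _ a0 (fun j => f j < f b)%N (fun j => f j) a0_below.
by exists a; split=> // n /existsP[c /eqP <-] /a_max.
Qed.

Lemma threshold_placing b (g : 'I_k.+1 -> 'I_k.+1) : (0 < f b)%N ->
  (forall j, nat_of_ord (g j) = if (f j < f b)%N then 0%N else f b) ->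
  [/\ placing g, forall l, (0 < l)%N -> height g l = (l == f b : nat)
    & placing_le g f].
Proof.
move=> fb_gt0 gE; split.
- move=> j; rewrite gE; case: ifP => _.
    by apply/esym/eqP; rewrite cards_eq0; apply/eqP/setP => l; rewrite !inE ltn0.
  rewrite [LHS](hf b); apply: eq_card => l; rewrite !inE gE.
  by case: ifP; rewrite ?fb_gt0 ?ltnn.
- move=> l l_gt0; rewrite /height /in_range.
  case: (eqVneq l (f b)) => [->|l_ne]; last first.
    rewrite ifF //; apply/negbTE/existsPn => j; rewrite gE.
    by case: ifP => _; rewrite eq_sym // -lt0n.
  by rewrite ifT //; apply/existsP; exists b; rewrite gE ltnn.
- by move=> j; rewrite gE; case: ifP => // /negbT; rewrite -leqNgt.
Qed.

End Placings.

Lemma le_bigmax_seq (R : realDomainType) (I : eqType) (r : seq I) (F : I -> R) x :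
  x \in r -> F x <= \big[Num.max/0]_(y <- r) F y.
Proof.
elim: r => //= a r IH; rewrite in_cons big_cons le_max => /orP[/eqP <-|/IH ->].
  by rewrite lexx.
by rewrite orbT.
Qed.

Lemma in_range_bounds (k : nat) (f : 'I_k.+1 -> 'I_k.+1) m n :
  in_range f n -> (m < n)%N -> (1 <= n <= k)%N.
Proof.
case/existsP=> j /eqP <- mj; rewrite (leq_ltn_trans (leq0n m) mj).
by rewrite -ltnS ltn_ord.
Qed.

Section Phi.

Variables (R : realFieldType) (k : nat) (f : 'I_k.+1 -> 'I_k.+1) (t : nat -> R).

Definition tail (m : nat) : R :=
  \sum_(1 <= n < k.+1 | in_range f n && (m < n)%N) t n / n%:R.

Definition gap (m1 m2 : nat) : R :=
  \sum_(1 <= n < k.+1 | in_range f n && (m1 < n <= m2)%N) t n / n%:R.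

Definition slope : R := norm_inf k t / norm_1 k t.

(* phi expressed through the tail sum; this holds also for t = 0, where the
   infinity norm vanishes. *)
Lemma phi_tailE j :
  phi f t j = (1 - norm_inf k t) * @v0 R k j + slope * tail (f j).
Proof.
rewrite /phi /slope; case: ifP => [t0 | _].
  have -> : norm_inf k t = 0.
    rewrite /norm_inf big_nat_cond.
    apply: (big_ind (fun x => x = 0)) => // [x y -> ->|n /andP[/andP[n1 nk] _]].
      by rewrite maxxx.
    move/allP: t0 => /(_ n); rewrite mem_iota n1 add1n => /(_ nk) /eqP ->.
    by rewrite normr0.
  by rewrite subr0 mul1r !mul0r addr0.
congr (_ + _ * _); rewrite /tail big_mkcondr; apply: eq_bigr => n _.
by rewrite /vfn; case: ifP; rewrite ?mulr0 // mul1r.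
Qed.

Lemma tail_split m1 m2 : (m1 <= m2)%N -> tail m1 = tail m2 + gap m1 m2.
Proof.
move=> m12; rewrite /tail (bigID (fun n => m2 < n)%N) /=; congr (_ + _).
  apply: eq_bigl => n; case: (ltnP m2 n) => [m2n|]; last by rewrite !andbF.
  by rewrite (leq_ltn_trans m12 m2n) !andbT.
by apply: eq_bigl => n; rewrite -leqNgt andbA.
Qed.

Lemma slope_gt0 n : (1 <= n <= k)%N -> t n != 0 -> 0 < slope.
Proof.
move=> n_bounds tn; have tn_gt0 : 0 < `|t n| by rewrite normr_gt0.
have n_iota : n \in index_iota 1 k.+1 by rewrite mem_index_iota ltnS.
have le_inf : `|t n| <= norm_inf k t := le_bigmax_seq _ n_iota.
have le_1 : `|t n| <= norm_1 k t.
  rewrite /norm_1 (bigD1_seq n) ?iota_uniq //= lerDl.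
  by apply: sumr_ge0 => l _; apply: normr_ge0.
by rewrite divr_gt0 // (lt_le_trans tn_gt0).
Qed.

Lemma phi_sub a b :
  (f a <= f b)%N -> phi f t a - phi f t b = slope * gap (f a) (f b).
Proof.
move=> ab; rewrite !phi_tailE (tail_split ab) mulrDr addrA.
by rewrite /v0 [_ + _ - _]addrC addKr.
Qed.

(* From now on t is nonnegative on 1..k, as it is on the box [0, h(f)]. *)
Hypothesis t_ge0 : forall n, (1 <= n <= k)%N -> 0 <= t n.

Lemma gap_term_ge0 m1 m2 n :
  (n \in index_iota 1 k.+1) && (in_range f n && (m1 < n <= m2)%N) ->
  0 <= t n / n%:R.
Proof.
rewrite mem_index_iota ltnS => /andP[n_range _].
by rewrite divr_ge0 ?t_ge0.
Qed.

Lemma gap_ge0 m1 m2 : 0 <= gap m1 m2.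
Proof. by rewrite /gap big_seq_cond sumr_ge0 // => n; apply: gap_term_ge0. Qed.

Lemma gap_neq0P m1 m2 :
  gap m1 m2 != 0 <-> exists n, [/\ in_range f n, (m1 < n <= m2)%N & t n != 0].
Proof.
rewrite /gap big_seq_cond psumr_neq0; last by move=> n; apply: gap_term_ge0.
split=> [/hasP[n _ /andP[/andP[_ /andP[ran mn]] tn_gt0]] | [n [ran mn tn]]].
  by exists n; split=> //; apply: contraTneq tn_gt0 => ->; rewrite mul0r ltxx.
have /andP[n_gt0 n_le_k] := in_range_bounds ran (andP mn).1.
have n_iota : n \in index_iota 1 k.+1 by rewrite mem_index_iota n_gt0.
apply/hasP; exists n => //; rewrite n_iota ran mn divr_gt0 ?ltr0n //.
by rewrite lt0r tn t_ge0 ?n_gt0.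
Qed.

(* A nonzero gap contains a nonzero weight, which also makes the slope
   positive. *)
Lemma slope_gap_gt0 m1 m2 : gap m1 m2 != 0 -> 0 < slope * gap m1 m2.
Proof.
move=> gap_neq0; have /gap_neq0P[n [ran /andP[m1n _] tn]] := gap_neq0.
apply: mulr_gt0; first exact: slope_gt0 (in_range_bounds ran m1n) tn.
by rewrite lt0r gap_neq0 gap_ge0.
Qed.

Lemma phi_antitone a b : (f a <= f b)%N -> phi f t b <= phi f t a.
Proof.
move=> ab; rewrite -subr_ge0 phi_sub //.
have [-> | /slope_gap_gt0 /ltW //] := eqVneq (gap (f a) (f b)) 0.
by rewrite mulr0.
Qed.

Lemma phi_ltP a b : (f a <= f b)%N ->
  phi f t b < phi f t a <-> exists n, [/\ in_range f n, (f a < n <= f b)%N & t n != 0].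
Proof.
move=> ab; rewrite -subr_gt0 phi_sub //.
split=> [pos | /gap_neq0P /slope_gap_gt0 //]; apply/gap_neq0P.
by apply: contraTneq pos => ->; rewrite mulr0 ltxx.
Qed.

Lemma phi_cut b j : t (f b) != 0 -> (phi f t b < phi f t j) = (f j < f b)%N.
Proof.
move=> tb; case: (ltnP (f j) (f b)) => [jb | bj].
  apply/(phi_ltP (ltnW jb)); exists (f b); split=> //; last by rewrite jb leqnn.
  by apply/existsP; exists b.
by apply/negbTE; rewrite -leNgt phi_antitone.
Qed.

(* Conversely, if some level r cuts out {f < f b} with f b > 0, then the weight
   of f b is nonzero: otherwise phi would not drop between the largest value
   below f b and f b itself. *)
Lemma cut_weight_neq0 (hf : placing f) b r : (0 < f b)%N ->
  (forall j, (r < phi f t j) = (f j < f b)%N) -> t (f b) != 0.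
Proof.
move=> fb_gt0 below; have [a [ab a_max]] := placing_lower_neighbour hf fb_gt0.
have b_le_r : phi f t b <= r by rewrite leNgt below ltnn.
have r_lt_a : r < phi f t a by rewrite below.
have [n [ran /andP[an nb] tn]] := (phi_ltP (ltnW ab)).1 (le_lt_trans b_le_r r_lt_a).
suff <- : n = f b by [].
apply/eqP; rewrite eqn_leq nb leqNgt; apply: contraTN an => /(a_max _ ran).
by rewrite -leqNgt.
Qed.

End Phi.

Lemma box_support (R : realFieldType) (k : nat) (f : 'I_k.+1 -> 'I_k.+1)
  (t : nat -> R) (i : nat) :
  in_box f t -> (1 <= i <= k)%N -> t i != 0 -> in_range f i.
Proof.
move=> ht hi; apply: contraTT => /negbTE out; rewrite negbK.
have /andP[ti_ge0] := ht i hi; rewrite /height out => ti_le0.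
by rewrite eq_le ti_le0 ti_ge0.
Qed.

Theorem lemma5p9 (R : realFieldType) (k : nat) (hk : (1 <= k)%N)
  (f : 'I_k.+1 -> 'I_k.+1) (hf : placing f)
  (t : nat -> R) (ht : in_box f t) :
  forall i : nat, (1 <= i <= k)%N ->
    (t i != 0 <-> exists r : R, #|[set j : 'I_k.+1 | r < phi f t j]| = i)
    /\
    (forall r : R, #|[set j : 'I_k.+1 | r < phi f t j]| = i ->
       let g := fun j : 'I_k.+1 =>
                  if phi f t j <= r then (inord i : 'I_k.+1) else ord0 in
       placing g
       /\ (forall l : nat, (1 <= l <= k)%N -> height g l = (l == i : nat))
       /\ placing_le g f).
Proof.
move=> i hi; have /andP[i_gt0 i_le_k] := hi.
have t_ge0 n : (1 <= n <= k)%N -> 0 <= t n by move=> /ht /andP[].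
have level r : #|[set j | r < phi f t j]| = i ->
    exists b, nat_of_ord (f b) = i /\ forall j, (r < phi f t j) = (f j < i)%N.
  exact: (antitone_superlevel (u := phi f t) hf (phi_antitone t_ge0) i_le_k).
split; first split.
- move=> ti; have /existsP[b /eqP fb] := box_support ht hi ti.
  exists (phi f t b); rewrite -fb (hf b); apply: eq_card => j.
  by rewrite !inE phi_cut ?fb.
- case=> r /level[b [fb below]]; rewrite -fb.
  apply: (cut_weight_neq0 t_ge0 hf (r := r)); first by rewrite fb.
  by move=> j; rewrite below fb.
- move=> r /level[b [fb below]] g.
  have gE j : nat_of_ord (g j) = if (f j < f b)%N then 0%N else f b.
    by rewrite /g leNgt below fb; case: (f j < i)%N => //=; rewrite inordK ?ltnS.
  have fb_gt0 : (0 < f b)%N by rewrite fb.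
  have [g_placing g_height g_le] := threshold_placing hf fb_gt0 gE.
  split=> //; split=> // l /andP[l_gt0 _].
  by rewrite g_height // fb.
Qed.
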